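(* In a finite dynamic game as described in the context, suppose $K^i$ is unilaterally sufficient information for player $i\in\mathcal{I}$. Then for each $j\in\mathcal{I}\setminus\{i\}$ and $t\in\mathcal{T}$ there exist functions $\Pi_t^{j,i,g^{-\{i,j\}}}:\mathcal{K}_t^i\times\mathcal{H}_t^j\times\mathcal{U}_t^i\times\mathcal{U}_t^j\to\Delta(\mathcal{H}_{t+1}^j)$ and $r_t^{i,j,g^{-\{i,j\}}}:\mathcal{K}_t^i\times\mathcal{H}_t^j\times\mathcal{U}_t^i\times\mathcal{U}_t^j\to[-1,1]$, depending on the strategy profile $g$ only through $g^{-\{i,j\}}=(g^l)_{l\notin\{i,j\}}$, such that for all behavioral strategy profiles $g$: (1) $\Pr^g(\tilde h_{t+1}^j\mid h_t^i,h_t^j,u_t^i,u_t^j)=\Pi_t^{j,i,g^{-\{i,j\}}}(\tilde h_{t+1}^j\mid k_t^i,h_t^j,u_t^i,u_t^j)$ for all $t<T$, and (2) $\mathbb{E}^g[R_t^j\mid h_t^i,h_t^j,u_t^i,u_t^j]=r_t^{i,j,g^{-\{i,j\}}}(k_t^i,h_t^j,u_t^i,u_t^j)$ for all $t$, whenever the left-hand sides are well defined (the conditioning event has positive probability).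
   Context: Game model: finite set of players $\mathcal{I}$, times $\mathcal{T}=\{1,\dots,T\}$. At time $t$ each player $i$ takes action $U_t^i\in\mathcal{U}_t^i$, obtains reward $R_t^i\in[-1,1]$ and learns new information $Z_t^i\in\mathcal{Z}_t^i$. There is a state $X_t\in\mathcal{X}_t$ with $(X_{t+1},Z_t,R_t)=f_t(X_t,U_t,W_t)$ for fixed functions $f_t$. Primitive random variables $(X_1,H_1)$ and $W_1,\dots,W_T$ are mutually independent with commonly known distributions. All sets are finite. Perfect recall: $H_t^i=(H_1^i,Z_{1:t-1}^i)\in\mathcal{H}_t^i$, and $U_t^i$ is a component of $Z_t^i$. Behavioral strategy $g_t^i:\mathcal{H}_t^i\to\Delta(\mathcal{U}_t^i)$. A realization is admissible under $g$ if it has positive probability under $g$. Compression: $K_1^i=\iota_1^i(H_1^i)$, $K_t^i=\iota_t^i(K_{t-1}^i,Z_{t-1}^i)$ for fixed maps, finite value sets $\mathcal{K}_t^i$; $k_t^i$ is the compression of $h_t^i$. Unilaterally sufficient information (USI): $K^i$ is USI for player $i$ if there exist $F_t^{i,g^i}:\mathcal{K}_t^i\to\Delta(\mathcal{H}_t^i)$ depending only on $g^i$ and $\Phi_t^{i,g^{-i}}:\mathcal{K}_t^i\to\Delta(\mathcal{X}_t\times\mathcal{H}_t^{-i})$ depending only on $g^{-i}$ with $\Pr^g(x_t,h_t\mid k_t^i)=F_t^{i,g^i}(h_t^i\mid k_t^i)\Phi_t^{i,g^{-i}}(x_t,h_t^{-i}\mid k_t^i)$ for all behavioral profiles $g$,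 all $t$, all $k_t^i$ admissible under $g$ (with $x_t,h_t^i,h_t^{-i}$ ranging independently; the left side is $0$ if they disagree on shared components). *)

From HB Require Import structures.
From mathcomp Require Import all_boot all_order all_algebra.
From mathcomp Require Import reals.
Set Implicit Arguments. Unset Strict Implicit. Unset Printing Implicit Defensive.
Import Order.TTheory GRing.Theory Num.Theory.
Local Open Scope ring_scope.

Definition is_dist (R : realType) (A : finType) (p : {ffun A -> R}) : Prop :=
  (forall a, 0 <= p a) /\ \sum_(a : A) p a = 1.

(* Times are 0-indexed: t = 0, ..., horizon - 1 correspond to the paper's
   1, ..., T.  Z_t^i is represented as the pair (U_t^i, Y_t^i): the action
   U_t^i is a component of Z_t^i and f_t produces the remaining part Y_t^i.
   The families are indexed by all of nat; only t < horizon (and X_horizon)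
   matter. *)
Record game (R : realType) := Game {
  horizon : nat;
  player : finType;
  X : nat -> finType;
  W : nat -> finType;
  U : nat -> player -> finType;
  Y : nat -> player -> finType;             (* new info besides own action *)
  H1 : player -> finType;
  P0 : {ffun (X 0 * {dffun forall i, H1 i}) -> R};
  PW : forall t, {ffun W t -> R};
  dyn : forall t, X t -> {dffun forall i, U t i} -> W t ->
          (X t.+1 * {dffun forall i, Y t i});
  rew : forall t, X t -> {dffun forall i, U t i} -> W t -> player -> R
}.

Arguments horizon {R}. Arguments player {R}. Arguments X {R}. Arguments W {R}.
Arguments U {R}. Arguments Y {R}. Arguments H1 {R}. Arguments P0 {R}.
Arguments PW {R}. Arguments dyn {R}. Arguments rew {R}.

Section Game.
Variables (R : realType) (G : game R).

Definition valid_game : Prop :=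
  is_dist (P0 G) /\ (forall t, is_dist (PW G t)) /\
  (forall t x u w i, -1 <= rew G t x u w i <= 1).

Definition Zt (t : nat) (i : player G) : finType := (U G t i * Y G t i)%type.

Fixpoint Hist (i : player G) (t : nat) : finType :=
  match t with
  | 0 => H1 G i
  | t'.+1 => (Hist i t' * Zt t' i)%type
  end.

Definition ActProf (t : nat) : finType := {dffun forall i, U G t i}.
Definition HistProf (t : nat) : finType := {dffun forall i, Hist i t}.
Definition HistOthers (i : player G) (t : nat) : finType :=
  {dffun forall j : {j : player G | j != i}, Hist (sval j) t}.

Definition restrict (i : player G) (t : nat) (h : HistProf t) : HistOthers i t :=
  @finfun _ (fun j : {j : player G | j != i} => Hist (sval j) t)
    (fun j => h (sval j)).

Definition next_hist (t : nat) (h : HistProf t) (u : ActProf t)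
    (y : {dffun forall i, Y G t i}) : HistProf t.+1 :=
  @finfun _ (fun i => Hist i t.+1) (fun i => (h i, (u i, y i))).

Definition strategy (i : player G) := forall t, Hist i t -> {ffun U G t i -> R}.
Definition profile := forall i : player G, strategy i.

Definition valid_strategy (i : player G) (s : strategy i) : Prop :=
  forall t h, is_dist (s t h).
Definition valid_profile (g : profile) : Prop :=
  forall i, valid_strategy (g i).

Fixpoint mu (g : profile) (t : nat) : {ffun (X G t * HistProf t) -> R} :=
  match t with
  | 0 => [ffun s : X G 0 * HistProf 0 =>
            P0 G (s.1, @finfun _ (fun i => H1 G i) (fun i => s.2 i))]
  | t'.+1 => [ffun s' : X G t'.+1 * HistProf t'.+1 =>
      \sum_(s : X G t' * HistProf t') \sum_(u : ActProf t') \sum_(w : W G t')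
        (if ((dyn G t' s.1 u w).1, next_hist s.2 u (dyn G t' s.1 u w).2) == s'
         then mu g t' s * (\prod_i g i t' (s.2 i) (u i)) * PW G t' w
         else 0)]
  end.

Definition Ex (g : profile) (t : nat)
    (F : X G t -> HistProf t -> ActProf t -> W G t -> R) : R :=
  \sum_(s : X G t * HistProf t) \sum_(u : ActProf t) \sum_(w : W G t)
    mu g t s * (\prod_i g i t (s.2 i) (u i)) * PW G t w * F s.1 s.2 u w.

Definition ind (b : bool) : R := if b then 1 else 0.

Record compression (i : player G) := Compression {
  K : nat -> finType;
  iota1 : H1 G i -> K 0;
  iotaS : forall t, K t -> Zt t i -> K t.+1
}.

Fixpoint compress (i : player G) (C : compression i) (t : nat) : Hist i t -> K C t :=
  match t return Hist i t -> K C t with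
  | 0 => fun h => iota1 C h
  | t'.+1 => fun h => iotaS (compress C h.1) h.2
  end.

Definition probK (g : profile) (i : player G) (C : compression i) (t : nat)
    (k : K C t) : R :=
  \sum_(s : X G t * HistProf t) mu g t s * ind (compress C (s.2 i) == k).

Definition USI (i : player G) (C : compression i) : Prop :=
  exists (F : forall (s : strategy i) t, K C t -> {ffun Hist i t -> R})
         (Phi : profile -> forall t, K C t -> {ffun (X G t * HistOthers i t) -> R}),
    (forall s t k, valid_strategy s -> is_dist (F s t k)) /\
    (forall g t k, valid_profile g -> is_dist (Phi g t k)) /\
    (forall g g', valid_profile g -> valid_profile g' ->
       (forall l, l != i -> forall t h, g l t h = g' l t h) ->
       forall t k, Phi g t k = Phi g' t k) /\
    (forall g t (k : K C t) (x : X G t) (h : HistProf t),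
       valid_profile g -> (t < horizon G)%N -> 0 < probK g k ->
       mu g t (x, h) * ind (compress C (h i) == k) / probK g k
       = F (g i) t k (h i) * Phi g t k (x, restrict i h)).

Definition cond_ev (i j : player G) (t : nat) (hi : Hist i t) (hj : Hist j t)
    (ui : U G t i) (uj : U G t j) (x : X G t) (h : HistProf t) (u : ActProf t)
    (w : W G t) : bool :=
  [&& h i == hi, h j == hj, u i == ui & u j == uj].

End Game.

Arguments ind {R} b.

(* By perfect recall, the law of (X_t, H_t) is the product of the own-action
   likelihoods of every player's history with a strategy-free term.  On the event
   {h^i, h^j, u^i, u^j} the factors of players i and j are constants, so they
   cancel from every conditional expectation: these depend on g only through
   g^{-{i,j}} and may be computed after replacing g^i and g^j by uniform
   strategies.  Then g^i no longer reacts to h^i, and unilateral sufficiency,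
   Pr(x_t, h_t | k) = F(h^i | k) Phi(x_t, h^{-i} | k), turns the conditional
   expectation of any quantity not involving h^i into one where F(h^i | k)
   cancels as well; it thus depends on h^i only through k = compress h^i, and
   the kernels evaluate it at any representative h^i of k. *)
From HB Require Import structures.
From mathcomp Require Import all_boot all_order all_algebra.
From mathcomp Require Import reals boolp.
From mathcomp Require Import ring.
Set Implicit Arguments. Unset Strict Implicit. Unset Printing Implicit Defensive.
Import Order.TTheory GRing.Theory Num.Theory.
Local Open Scope ring_scope.

Section Game.
Variables (R : realType) (G : game R).

Lemma ind_ge0 b : 0 <= ind b :> R.
Proof. by case: b; rewrite /= ?ler01. Qed.

Lemma ind_andb a b : ind (a && b) = ind a * ind b :> R.
Proof. by case: a; case: b; rewrite /= ?mulr0 ?mulr1. Qed.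

Lemma sum_ind_eq (A : finType) (a0 : A) : \sum_(a : A) ind (a0 == a) = 1 :> R.
Proof.
rewrite (bigD1 a0) //= eqxx big1 ?addr0 // => a aa0.
by rewrite eq_sym (negbTE aa0).
Qed.

Definition unif_dist (A : finType) : {ffun A -> R} := [ffun _ => #|A|%:R^-1].

Lemma unif_dist_gt0 (A : finType) (a : A) : (0 < #|A|)%N -> 0 < unif_dist A a.
Proof. by move=> A0; rewrite ffunE invr_gt0 ltr0n. Qed.

Lemma unif_dist_is_dist (A : finType) : (0 < #|A|)%N -> is_dist (unif_dist A).
Proof.
move=> A0; split=> [a|]; first exact/ltW/unif_dist_gt0.
under eq_bigr do rewrite ffunE.
by rewrite sumr_const -[_ *+ _]mulr_natr mulVf // pnatr_eq0 -lt0n.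
Qed.

Lemma dist_card_gt0 (A : finType) (p : {ffun A -> R}) : is_dist p -> (0 < #|A|)%N.
Proof.
case=> _; rewrite lt0n; apply: contra_eqN => /eqP/card0_eq A0.
by rewrite big_pred0 // eq_sym oner_eq0.
Qed.

Lemma divf_mul2l (c a b : R) : c != 0 -> c * a / (c * b) = a / b.
Proof. by move=> c0; rewrite invfM mulrACA mulfV ?mul1r. Qed.

Hypothesis vG : valid_game G.

Lemma mu_ge0 (g : profile G) : valid_profile g -> forall t s, 0 <= mu g t s.
Proof.
have [[P0_ge0 _] [PW_dist _]] := vG.
move=> vg; elim=> [|t IH] s /=; rewrite ffunE; first exact: P0_ge0.
apply: sumr_ge0 => s0 _; apply: sumr_ge0 => u _; apply: sumr_ge0 => w _.
case: ifP => _ //; rewrite mulr_ge0 ?mulr_ge0 //; last by case: (PW_dist t).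
by apply: prodr_ge0 => l _; case: (vg l t (s0.2 l)).
Qed.

Fixpoint act_lik (g : profile G) (l : player G) (t : nat) : Hist l t -> R :=
  match t return Hist l t -> R with
  | 0 => fun _ => 1
  | t'.+1 => fun h => act_lik g h.1 * g l t' h.1 h.2.1
  end.

(* Not a valid profile: it divides all action probabilities out of [mu]. *)
Definition flat_profile : profile G := fun l t h => [ffun _ => 1].

Lemma mu_factor g t s : mu g t s = (\prod_l act_lik g (s.2 l)) * mu flat_profile t s.
Proof.
elim: t s => [|t IH] s /=; first by rewrite !ffunE big1 ?mul1r.
rewrite !ffunE mulr_sumr; apply: eq_bigr => s0 _; rewrite mulr_sumr.
apply: eq_bigr => u _; rewrite mulr_sumr; apply: eq_bigr => w _.
case: eqP => [<-|_]; last by rewrite mulr0.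
under [X in _ = X * _]eq_bigr => l _ do rewrite ffunE /=.
rewrite [X in _ * (_ * X * _)]big1 => [|l _]; last by rewrite ffunE.
rewrite IH big_split /=; ring.
Qed.

Lemma act_lik_ext (g g' : profile G) l : (forall t h, g l t h = g' l t h) ->
  forall t (h : Hist l t), act_lik g h = act_lik g' h :> R.
Proof. by move=> e; elim=> [|t IH] h //=; rewrite IH e. Qed.

Section Join.
Variables (i : player G) (t : nat).

Let nesym_neq (l : player G) : i <> l -> l != i.
Proof. by move=> ne; apply/eqP/nesym. Qed.

Definition join_hist (a : Hist i t) (b : HistOthers i t) : HistProf G t :=
  @finfun _ (fun l => Hist l t) (fun l =>
    match i =P l with
    | ReflectT e => eq_rect i (fun l => Hist l t) a l e
    | ReflectF ne => b (exist _ l (nesym_neq ne))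
    end).

Lemma join_hist_self a b : join_hist a b i = a.
Proof.
rewrite ffunE; destruct (i =P i) as [e|ne]; last by case: ne.
by rewrite (eq_axiomK e).
Qed.

Lemma restrict_join_hist a b : restrict i (join_hist a b) = b.
Proof.
apply/ffunP => -[l li]; rewrite !ffunE /=.
destruct (i =P l) as [e|ne]; first by exfalso; move: li; rewrite -e eqxx.
by congr (b (exist _ l _)); apply: bool_irrelevance.
Qed.

Lemma join_hist_restrict (h : HistProf G t) : join_hist (h i) (restrict i h) = h.
Proof.
apply/ffunP => l; rewrite !ffunE.
by destruct (i =P l) as [e|ne]; [case: l / e | rewrite ffunE].
Qed.

Lemma sum_hist_fixed (a : Hist i t) (f : HistProf G t -> R) :
  \sum_(h : HistProf G t) ind (h i == a) * f h = \sum_b f (join_hist a b).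
Proof.
rewrite (eq_bigr (fun h : HistProf G t => if h i == a then f h else 0)); last first.
  by move=> h _; case: eqP => _; rewrite /= ?mul1r ?mul0r.
rewrite -big_mkcond (reindex_onto (join_hist a) (@restrict R G i t)); last first.
  by move=> h /eqP <-; apply: join_hist_restrict.
by apply: eq_bigl => b; rewrite restrict_join_hist join_hist_self !eqxx.
Qed.

Lemma restrict_eq (h h' : HistProf G t) l :
  restrict i h = restrict i h' -> l != i -> h l = h' l.
Proof.
move=> e li; have := congr1 (fun f : HistOthers i t => f (exist _ l li)) e.
by rewrite !ffunE.
Qed.

End Join.

Lemma state_inhabited (g : profile G) : valid_profile g ->
  forall t, inhabited (X G t * HistProf G t).
Proof.
have [P0_dist [PW_dist _]] := vG.
move=> vg; elim=> [|t [s]].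
  have /card_gt0P[[x h] _] := dist_card_gt0 P0_dist.
  by constructor; exact: (x, @finfun _ (fun l => Hist l 0) (fun l => h l)).
have /fin_all_exists[u _] : forall l, exists a : U G t l, True.
  by move=> l; have /card_gt0P[a _] := dist_card_gt0 (vg l t (s.2 l)); exists a.
have /card_gt0P[w _] := dist_card_gt0 (PW_dist t).
pose uf : ActProf G t := @finfun _ (fun l => U G t l) u.
by constructor; exact: ((dyn G t s.1 uf w).1, next_hist s.2 uf (dyn G t s.1 uf w).2).
Qed.

Lemma card_Hist_gt0 (g : profile G) : valid_profile g -> forall l t, (0 < #|@Hist R G l t|)%N.
Proof. by move=> vg l t; have [s] := state_inhabited vg t; apply/card_gt0P; exists (s.2 l). Qed.

Definition rvar t := X G t -> HistProf G t -> ActProf G t -> W G t -> R.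

Lemma eq_Ex (g : profile G) t (phi psi : rvar t) :
  (forall x h u w, phi x h u w = psi x h u w) -> Ex g phi = Ex g psi.
Proof.
move=> e; apply: eq_bigr => s _; apply: eq_bigr => u _; apply: eq_bigr => w _.
by rewrite e.
Qed.

Section Pair.
Variables (i j : player G) (ji : j != i).

Definition agree_off_ij (g g' : profile G) : Prop :=
  forall l, l != i -> l != j -> forall t (h : Hist l t), g l t h = g' l t h.

Section Conditioning.
Variables (t : nat) (hi : Hist i t) (hj : Hist j t) (ui : U G t i) (uj : U G t j).

Definition cond_Ex (g : profile G) (phi : rvar t) : R :=
  Ex g (fun x h u w => ind (cond_ev hi hj ui uj x h u w) * phi x h u w).

Definition cond_mass (g : profile G) : R := cond_Ex g (fun _ _ _ _ => 1).

Definition cond_ratio (g : profile G) (phi : rvar t) : R := cond_Ex g phi / cond_mass g.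

Lemma eq_cond_Ex g (phi psi : rvar t) :
  (forall x h u w, phi x h u w = psi x h u w) -> cond_Ex g phi = cond_Ex g psi.
Proof. by move=> e; apply: eq_Ex => x h u w; rewrite e. Qed.

Lemma cond_massE g : cond_mass g = Ex g (fun x h u w => ind (cond_ev hi hj ui uj x h u w)).
Proof. by apply: eq_Ex => x h u w; rewrite mulr1. Qed.

Definition cond_Ex_others (g : profile G) (phi : rvar t) : R :=
  \sum_(s : X G t * HistProf G t) \sum_(u : ActProf G t) \sum_(w : W G t)
    ind (cond_ev hi hj ui uj s.1 s.2 u w) *
    (\prod_(l | (l != i) && (l != j)) (act_lik g (s.2 l) * g l t (s.2 l) (u l))) *
    mu flat_profile t s * PW G t w * phi s.1 s.2 u w.

Lemma cond_Ex_factor g phi : cond_Ex g phi =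
  act_lik g hi * g i t hi ui * (act_lik g hj * g j t hj uj) * cond_Ex_others g phi.
Proof.
rewrite /cond_Ex /Ex /cond_Ex_others !mulr_sumr; apply: eq_bigr => s _.
rewrite !mulr_sumr; apply: eq_bigr => u _; rewrite !mulr_sumr; apply: eq_bigr => w _.
have [/and4P[/eqP si /eqP sj /eqP ei /eqP ej]|_] := boolP (cond_ev hi hj ui uj s.1 s.2 u w);
  last by rewrite /ind !(mul0r, mulr0).
rewrite mu_factor [_ * mu _ _ _ * _]mulrAC -big_split /= (bigD1 i) //= (bigD1 j) //=.
rewrite si sj ei ej /ind; ring.
Qed.

Lemma cond_Ex_others_ext (g g' : profile G) phi :
  agree_off_ij g g' -> cond_Ex_others g phi = cond_Ex_others g' phi.
Proof.
move=> gg'; apply: eq_bigr => s _; apply: eq_bigr => u _; apply: eq_bigr => w _.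
congr (_ * _ * _ * _ * _); apply: eq_bigr => l /andP[li lj].
by rewrite (act_lik_ext (gg' l li lj)) gg'.
Qed.

Lemma cond_ratio_others g phi : cond_mass g != 0 ->
  cond_ratio g phi = cond_Ex_others g phi / cond_Ex_others g (fun _ _ _ _ => 1).
Proof.
rewrite /cond_ratio /cond_mass !cond_Ex_factor mulf_eq0 negb_or => /andP[c0 _].
exact: divf_mul2l.
Qed.

Lemma cond_ExZ g c phi :
  cond_Ex g (fun x h u w => c * phi x h u w) = c * cond_Ex g phi.
Proof.
rewrite /cond_Ex /Ex mulr_sumr; apply: eq_bigr => s _; rewrite mulr_sumr.
by apply: eq_bigr => u _; rewrite mulr_sumr; apply: eq_bigr => w _; ring.
Qed.

Lemma cond_Ex_sum g (A : finType) (phi : A -> rvar t) :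
  \sum_a cond_Ex g (phi a) = cond_Ex g (fun x h u w => \sum_a phi a x h u w).
Proof.
rewrite exchange_big; apply: eq_bigr => s _; rewrite exchange_big.
apply: eq_bigr => u _; rewrite exchange_big; apply: eq_bigr => w _.
by rewrite -!mulr_sumr.
Qed.

Lemma ler_cond_Ex g phi psi : valid_profile g ->
  (forall x h u w, phi x h u w <= psi x h u w) -> cond_Ex g phi <= cond_Ex g psi.
Proof.
have [_ [PW_dist _]] := vG.
move=> vg le_phi; apply: ler_sum => s _; apply: ler_sum => u _; apply: ler_sum => w _.
rewrite ler_wpM2l ?ler_wpM2l ?ind_ge0 // !mulr_ge0 ?mu_ge0 //; last by case: (PW_dist t).
by apply: prodr_ge0 => l _; case: (vg l t (s.2 l)).
Qed.

Lemma cond_Ex_ge0 g phi : valid_profile g ->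
  (forall x h u w, 0 <= phi x h u w) -> 0 <= cond_Ex g phi.
Proof.
move=> vg phi_ge0; rewrite -(mul0r (cond_mass g)) -cond_ExZ.
by apply: ler_cond_Ex => // x h u w; rewrite mul0r.
Qed.

Lemma cond_Ex_eq0 g phi :
  (forall s : X G t * HistProf G t, s.2 i = hi -> mu g t s = 0) -> cond_Ex g phi = 0.
Proof.
move=> mu0; apply: big1 => s _; apply: big1 => u _; apply: big1 => w _.
have [/mu0->|si] := eqVneq (s.2 i) hi; first by rewrite !mul0r.
by rewrite /cond_ev (negbTE si) /ind /= !(mul0r, mulr0).
Qed.

End Conditioning.

Definition ignores_hist_i t (phi : rvar t) : Prop :=
  forall x h h' u w, restrict i h = restrict i h' -> phi x h u w = phi x h' u w.

Definition open_loop (s : strategy i) t : Prop := forall h h', s t h = s t h'.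

Section UnilateralSufficiency.
Variables (C : compression i)
  (F : forall (s : strategy i) t, K C t -> {ffun Hist i t -> R})
  (Phi : profile G -> forall t, K C t -> {ffun (X G t * HistOthers i t) -> R}).
Hypothesis mu_cond_K : forall g t (k : K C t) (x : X G t) (h : HistProf G t),
  valid_profile g -> (t < horizon G)%N -> 0 < probK g k ->
  mu g t (x, h) * ind (compress C (h i) == k) / probK g k
  = F (g i) k (h i) * Phi g k (x, restrict i h).

Lemma probK_gt0 g t (hi : Hist i t) hj ui uj : valid_profile g ->
  cond_mass hi hj ui uj g != 0 -> 0 < probK g (compress C hi).
Proof.
move=> vg; apply: contraNT; rewrite -leNgt => pK_le0.
have terms_ge0 (s : X G t * HistProf G t) :
    true -> 0 <= mu g t s * ind (compress C (s.2 i) == compress C hi).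
  by rewrite mulr_ge0 ?mu_ge0 ?ind_ge0.
have pK0 : probK g (compress C hi) = 0.
  by apply/eqP; rewrite eq_le pK_le0 sumr_ge0.
apply/eqP/cond_Ex_eq0 => s si.
by have := psumr_eq0P terms_ge0 pK0 (i := s) isT; rewrite si eqxx mulr1.
Qed.

Lemma mu_usi g t (k : K C t) x (h : HistProf G t) :
  valid_profile g -> (t < horizon G)%N -> 0 < probK g k -> compress C (h i) = k ->
  mu g t (x, h) = probK g k * F (g i) k (h i) * Phi g k (x, restrict i h).
Proof.
move=> vg ht pK_gt0 hk; have := mu_cond_K x h vg ht pK_gt0.
by rewrite hk eqxx mulr1 -mulrA => <-; rewrite mulrC divfK ?gt_eqF.
Qed.

Definition others_weight g t (k : K C t) (hj : Hist j t) ui uj (phi : rvar t)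
    (s : X G t * HistProf G t) : R :=
  Phi g k (s.1, restrict i s.2) * \sum_(u : ActProf G t) \sum_(w : W G t)
    ind (cond_ev (s.2 i) hj ui uj s.1 s.2 u w) *
    (\prod_l g l t (s.2 l) (u l)) * PW G t w * phi s.1 s.2 u w.

Lemma cond_Ex_usi g t (hi : Hist i t) hj ui uj phi :
  valid_profile g -> (t < horizon G)%N -> 0 < probK g (compress C hi) ->
  let k := compress C hi in
  cond_Ex hi hj ui uj g phi =
  probK g k * F (g i) k hi * \sum_x \sum_b others_weight g k hj ui uj phi (x, join_hist hi b).
Proof.
move=> vg ht pK_gt0 k.
under [in RHS]eq_bigr => x _
  do rewrite -(sum_hist_fixed hi (fun h => others_weight g k hj ui uj phi (x, h))).
rewrite pair_big mulr_sumr; apply: eq_bigr => -[x h] _ /=.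
have [hi_h|] := eqVneq (h i) hi; last first.
  move=> ne; rewrite mul0r mulr0; apply: big1 => u _; apply: big1 => w _.
  by rewrite /cond_ev (negbTE ne) /ind /= !(mul0r, mulr0).
rewrite (mu_usi x vg ht pK_gt0) hi_h // /others_weight !mulr_sumr.
apply: eq_bigr => u _; rewrite !mulr_sumr; apply: eq_bigr => w _.
by rewrite /= hi_h /ind; ring.
Qed.

Lemma others_weight_restrict g t (k : K C t) hj ui uj phi x (h h' : HistProf G t) :
  open_loop (g i) t -> ignores_hist_i phi -> restrict i h = restrict i h' ->
  others_weight g k hj ui uj phi (x, h) = others_weight g k hj ui uj phi (x, h').
Proof.
move=> gi_ol phi_ign hh'; rewrite /others_weight /= hh'; congr (_ * _).
apply: eq_bigr => u _; apply: eq_bigr => w _.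
rewrite /cond_ev !eqxx (restrict_eq hh' ji) (phi_ign x h h' u w hh').
congr (_ * _ * _ * _); apply: eq_bigr => l _.
have [->|li] := eqVneq l i; first by rewrite (gi_ol (h i) (h' i)).
by rewrite (restrict_eq hh' li).
Qed.

Lemma cond_ratio_compress g t (hi hi' : Hist i t) hj ui uj phi :
  valid_profile g -> open_loop (g i) t -> (t < horizon G)%N ->
  compress C hi = compress C hi' -> ignores_hist_i phi ->
  cond_mass hi hj ui uj g != 0 -> cond_mass hi' hj ui uj g != 0 ->
  cond_ratio hi hj ui uj g phi = cond_ratio hi' hj ui uj g phi.
Proof.
move=> vg gi_ol ht hh' phi_ign m0 m0'.
have pK_gt0 := probK_gt0 vg m0; have pK_gt0' := probK_gt0 vg m0'.
have S_eq psi : ignores_hist_i psi ->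
    \sum_x \sum_b others_weight g (compress C hi) hj ui uj psi (x, join_hist hi b) =
    \sum_x \sum_b others_weight g (compress C hi) hj ui uj psi (x, join_hist hi' b).
  move=> psi_ign; apply: eq_bigr => x _; apply: eq_bigr => b _.
  by apply: others_weight_restrict; rewrite ?restrict_join_hist.
move: m0 m0'; rewrite /cond_ratio /cond_mass !cond_Ex_usi // -hh' !mulf_eq0 !negb_or.
by move=> /andP[/andP[? ?] _] /andP[/andP[? ?] _]; rewrite !divf_mul2l ?mulf_neq0 // !S_eq.
Qed.

End UnilateralSufficiency.

(* Uniform strategies keep every (h^i, h^j, u^i, u^j) reachable and make g^i open-loop. *)
Definition reset_ij (g : profile G) : profile G :=
  fun l => if (l == i) || (l == j) then fun t _ => unif_dist (U G t l) else g l.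
Arguments reset_ij : clear implicits.

Lemma reset_ij_agree g : agree_off_ij (reset_ij g) g.
Proof. by move=> l li lj t h; rewrite /reset_ij (negbTE li) (negbTE lj). Qed.

Lemma reset_ij_eq g g' : agree_off_ij g g' -> reset_ij g = reset_ij g'.
Proof.
move=> gg'; apply: functional_extensionality_dep => l; rewrite /reset_ij.
case: ifP => [//|/norP[li lj]].
by apply: functional_extensionality_dep => t; apply: funext => h; apply: gg'.
Qed.

Lemma open_loop_reset_ij g t : open_loop (reset_ij g i) t.
Proof. by move=> h h'; rewrite /reset_ij eqxx. Qed.

Lemma valid_reset_ij g : valid_profile g -> valid_profile (reset_ij g).
Proof.
move=> vg l t h; rewrite /reset_ij; case: ifP => _; last exact: vg.
exact/unif_dist_is_dist/(dist_card_gt0 (vg l t h)).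
Qed.

Lemma act_lik_reset_ij_gt0 g l t (h : Hist l t) : valid_profile g ->
  (l == i) || (l == j) -> 0 < act_lik (reset_ij g) h.
Proof.
move=> vg lij; elim: t h => [|t IH] h /=; first exact: ltr01.
rewrite mulr_gt0 // /reset_ij lij.
exact/unif_dist_gt0/(dist_card_gt0 (vg l t h.1)).
Qed.

Section Reset.
Variables (t : nat) (hi : Hist i t) (hj : Hist j t) (ui : U G t i) (uj : U G t j).

Lemma cond_Ex_reset_ij g : valid_profile g -> exists2 c, 0 < c &
  forall phi, cond_Ex hi hj ui uj (reset_ij g) phi = c * cond_Ex_others hi hj ui uj g phi.
Proof.
move=> vg; eexists=> [|phi]; last first.
  by rewrite cond_Ex_factor (cond_Ex_others_ext _ _ _ _ _ (reset_ij_agree g)).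
have gt0 l (h : Hist l t) u : (l == i) || (l == j) -> 0 < reset_ij g l t h u.
  by move=> lij; rewrite /reset_ij lij; exact/unif_dist_gt0/(dist_card_gt0 (vg l t h)).
by rewrite !mulr_gt0 ?act_lik_reset_ij_gt0 ?gt0 ?eqxx ?orbT.
Qed.

Lemma cond_mass_reset_ij_gt0 g : valid_profile g ->
  0 < cond_mass hi hj ui uj g -> 0 < cond_mass hi hj ui uj (reset_ij g).
Proof.
rewrite /cond_mass => vg m_gt0; have [c c_gt0 E_reset] := cond_Ex_reset_ij vg.
have vg0 := valid_reset_ij vg.
rewrite lt_def cond_Ex_ge0 // andbT E_reset mulf_neq0 ?(gt_eqF c_gt0) //.
by move: (lt0r_neq0 m_gt0); rewrite cond_Ex_factor mulf_eq0 negb_or => /andP[].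
Qed.

Lemma cond_ratio_reset_ij g phi : valid_profile g -> 0 < cond_mass hi hj ui uj g ->
  cond_ratio hi hj ui uj g phi = cond_ratio hi hj ui uj (reset_ij g) phi.
Proof.
move=> vg m_gt0; have m'_gt0 := cond_mass_reset_ij_gt0 vg m_gt0.
rewrite !cond_ratio_others ?gt_eqF //.
by rewrite !(cond_Ex_others_ext _ _ _ _ _ (reset_ij_agree g)).
Qed.

End Reset.

Section Kernels.
Variable C : compression i.

Definition rep_hist g t (k : K C t) hj ui uj : option (Hist i t) :=
  [pick hi | (compress C hi == k) && (0 < cond_mass hi hj ui uj g)].

Definition cond_kernel g t (k : K C t) hj ui uj (phi : rvar t) (d : R) : R :=
  if rep_hist (reset_ij g) k hj ui uj is Some hi
  then cond_ratio hi hj ui uj (reset_ij g) phi else d.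

Lemma cond_kernel_agree g g' t (k : K C t) hj ui uj phi d : agree_off_ij g g' ->
  cond_kernel g k hj ui uj phi d = cond_kernel g' k hj ui uj phi d.
Proof. by move=> /reset_ij_eq gg'; rewrite /cond_kernel gg'. Qed.

Lemma cond_ratio_kernel g t (hi : Hist i t) hj ui uj phi d :
  USI C -> valid_profile g -> (t < horizon G)%N -> ignores_hist_i phi ->
  0 < cond_mass hi hj ui uj g ->
  cond_ratio hi hj ui uj g phi = cond_kernel g (compress C hi) hj ui uj phi d.
Proof.
move=> [F [Phi [_ [_ [_ mu_cond_K]]]]] vg ht phi_ign m_gt0.
have m0_gt0 := cond_mass_reset_ij_gt0 vg m_gt0.
rewrite (cond_ratio_reset_ij _ vg m_gt0) /cond_kernel /rep_hist.
case: pickP => [hi' /andP[/eqP hi'_k m0'_gt0]|no_rep]; last first.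
  by move: (no_rep hi); rewrite eqxx m0_gt0.
apply: (cond_ratio_compress mu_cond_K (valid_reset_ij vg) (open_loop_reset_ij (t:=t) g));
  by rewrite ?hi'_k ?gt_eqF.
Qed.

Definition next_hist_j t (hj' : Hist j t.+1) : rvar t :=
  fun x h u w => ind (next_hist h u (dyn G t x u w).2 j == hj').

Lemma ignores_next_hist_j t (hj' : Hist j t.+1) : ignores_hist_i (next_hist_j hj').
Proof. by move=> x h h' u w hh'; rewrite /next_hist_j !ffunE (restrict_eq hh' ji). Qed.

Definition next_hist_kernel g t (k : K C t) hj ui uj : {ffun Hist j t.+1 -> R} :=
  [ffun hj' => cond_kernel g k hj ui uj (next_hist_j hj') (unif_dist _ hj')].

Definition reward_kernel g t (k : K C t) hj ui uj : R :=
  cond_kernel g k hj ui uj (fun x h u w => rew G t x u w j) 0.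

Lemma next_hist_kernel_is_dist g t (k : K C t) hj ui uj : valid_profile g ->
  is_dist (next_hist_kernel g k hj ui uj).
Proof.
move=> vg; have vg0 := valid_reset_ij vg.
rewrite /next_hist_kernel /cond_kernel /rep_hist; case: pickP => [hi /andP[_ m_gt0]|_].
  split=> [hj'|]; rewrite ?ffunE.
    by apply: divr_ge0 (ltW m_gt0); apply: cond_Ex_ge0 => // *; apply: ind_ge0.
  under eq_bigr do rewrite ffunE.
  rewrite -mulr_suml cond_Ex_sum.
  by under eq_cond_Ex => x h u w do rewrite sum_ind_eq; rewrite mulfV ?gt_eqF.
have ->: [ffun hj' => unif_dist (Hist j t.+1) hj'] = unif_dist _.
  by apply/ffunP => hj'; rewrite ffunE.
exact/unif_dist_is_dist/(card_Hist_gt0 vg).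
Qed.

Lemma reward_kernel_bounds g t (k : K C t) hj ui uj : valid_profile g ->
  -1 <= reward_kernel g k hj ui uj <= 1.
Proof.
move=> vg; have vg0 := valid_reset_ij vg; have [_ [_ rew_bounds]] := vG.
rewrite /reward_kernel /cond_kernel /rep_hist.
case: pickP => [hi /andP[_ m_gt0]|_]; last by rewrite lerN10 ler01.
rewrite /cond_ratio ler_pdivlMr // ler_pdivrMr // mul1r /cond_mass -cond_ExZ.
by apply/andP; split; apply: ler_cond_Ex => // x h u w; case/andP: (rew_bounds t x u w j);
  rewrite ?mulr1.
Qed.

End Kernels.

End Pair.

End Game.

Theorem lemma8 (R : realType) (G : game R) (i : player G) (C : compression i) :
  valid_game G -> USI C ->
  forall j : player G, j != i ->
  exists (Pi : profile G -> forall t, K C t -> Hist j t -> U G t i -> U G t j ->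
                 {ffun Hist j t.+1 -> R})
         (r : profile G -> forall t, K C t -> Hist j t -> U G t i -> U G t j -> R),
    (* dependence on g only through g^{-{i,j}} *)
    (forall g g', valid_profile g -> valid_profile g' ->
       (forall l, l != i -> l != j -> forall t h, g l t h = g' l t h) ->
       forall t k hj ui uj, Pi g t k hj ui uj = Pi g' t k hj ui uj /\
                             r g t k hj ui uj = r g' t k hj ui uj) /\
    (* codomains Delta(H_{t+1}^j) and [-1,1] *)
    (forall g t k hj ui uj, valid_profile g ->
       ((t.+1 < horizon G)%N -> is_dist (Pi g t k hj ui uj)) /\
       ((t < horizon G)%N -> -1 <= r g t k hj ui uj <= 1)) /\
    (forall g, valid_profile g ->
      (* (1) *)
      (forall t (hi : Hist i t) (hj : Hist j t) (ui : U G t i) (uj : U G t j)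
              (hj' : Hist j t.+1),
         (t.+1 < horizon G)%N ->
         0 < Ex g (fun x h u w => ind (cond_ev hi hj ui uj x h u w)) ->
         Ex g (fun x h u w => ind (cond_ev hi hj ui uj x h u w &&
                   (next_hist h u (dyn G t x u w).2 j == hj')))
           / Ex g (fun x h u w => ind (cond_ev hi hj ui uj x h u w))
         = Pi g t (compress C hi) hj ui uj hj') /\
      (* (2) *)
      (forall t (hi : Hist i t) (hj : Hist j t) (ui : U G t i) (uj : U G t j),
         (t < horizon G)%N ->
         0 < Ex g (fun x h u w => ind (cond_ev hi hj ui uj x h u w)) ->
         Ex g (fun x h u w => ind (cond_ev hi hj ui uj x h u w) * rew G t x u w j)
           / Ex g (fun x h u w => ind (cond_ev hi hj ui uj x h u w))
         = r g t (compress C hi) hj ui uj)).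
Proof.
move=> vG usi j ji.
exists (@next_hist_kernel _ _ i j C), (@reward_kernel _ _ i j C); split; [|split].
- move=> g g' _ _ gg' t k hj ui uj; split; last exact: cond_kernel_agree.
  by apply/ffunP => hj'; rewrite !ffunE (cond_kernel_agree _ _ _ _ _ _ gg').
- move=> g t k hj ui uj vg; split=> _.
    exact: next_hist_kernel_is_dist.
  exact: reward_kernel_bounds.
- move=> g vg; split=> [t hi hj ui uj hj' ht|t hi hj ui uj ht]; rewrite -cond_massE => m_gt0.
    rewrite ffunE -(cond_ratio_kernel vG ji _ usi vg (ltnW ht) (ignores_next_hist_j ji hj'))//.
    by rewrite /cond_ratio; congr (_ / _); apply: eq_Ex => x h u w; rewrite ind_andb.
  by rewrite /reward_kernel -(cond_ratio_kernel vG ji _ usi vg ht _ m_gt0); last move=> *.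
Qed.
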